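(* Let $n \ge 2$ be an integer. If $M$ is a real $n\times n$ matrix such that each of the numbers $0,1,\dots,n-1$ appears exactly $n$ times in $M$, then $$|\det M| \le n^n\,\frac{n-1}{2}\left(\frac{n+1}{12}\right)^{\frac{n-1}{2}}.$$ If $M$ is a real $n\times n$ matrix such that each of the numbers $1,2,\dots,n$ appears exactly $n$ times in $M$, then $$|\det M| \le n^n\,\frac{n+1}{2}\left(\frac{n+1}{12}\right)^{\frac{n-1}{2}}.$$ *)

From HB Require Import structures.
From mathcomp Require Import all_boot all_order all_algebra.
Set Implicit Arguments. Unset Strict Implicit. Unset Printing Implicit Defensive.
Import Order.TTheory GRing.Theory Num.Theory.
Local Open Scope ring_scope.

Definition entry_count (R : eqType) (n : nat) (M : 'M[R]_n) (x : R) : nat :=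
  #|[set ij : 'I_n * 'I_n | M ij.1 ij.2 == x]|.

From HB Require Import structures.
From mathcomp Require Import all_boot all_order all_algebra.
From mathcomp Require Import ring lra.
Set Implicit Arguments. Unset Strict Implicit. Unset Printing Implicit Defensive.
Import Order.TTheory GRing.Theory Num.Theory.
Local Open Scope ring_scope.

(* Let s and F be the sum and the sum of squares of the entries of M, and let
   H be an orthogonal matrix whose first column is the normalised all-ones
   vector. The Gram matrix G = (MH)^T (MH) has det G = (det M)^2, trace F, and
   G 0 0 = |M 1|^2 / n >= (s / n)^2 =: y by Cauchy-Schwarz. Hadamard's
   inequality and AM-GM on the remaining diagonal entries give
   det G <= G 0 0 ((F - G 0 0) / (n - 1))^(n - 1), and x (F - x)^(n - 1) is
   nonincreasing for x >= F / n, so (det M)^2 <= y ((F - y) / (n - 1))^(n - 1).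
   When the entries are n copies of an arithmetic progression of length n, s
   and F are explicit and this is the stated bound. *)

Section Householder.
Variables (R : comPzRingType) (m : nat).

Definition householder_mx (a : R) (v : 'cV[R]_m) : 'M[R]_m := 1%:M - a *: (v *m v^T).

Lemma trmx_householder a v : (householder_mx a v)^T = householder_mx a v.
Proof. by rewrite linearB /= linearZ /= trmx1 trmx_mul trmxK. Qed.

Lemma householder_mxM a b al v : v^T *m v = al%:M ->
  householder_mx a v *m householder_mx b v = householder_mx (a + b - a * b * al) v.
Proof.
move=> vv; rewrite /householder_mx mulmxBl mul1mx mulmxBr mulmx1.
rewrite -scalemxAl -scalemxAr scalerA -mulmxA (mulmxA v^T) vv mul_scalar_mx.
rewrite -scalemxAr scalerA !scalerBl scalerDl.
by rewrite -addrA -opprD addrA [b *: _ + _]addrC.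
Qed.
End Householder.

Section RealInequalities.
Variable R : realFieldType.

Lemma sqr_sum_le n (z : 'I_n -> R) :
  (\sum_i z i) ^+ 2 <= n%:R * \sum_i z i ^+ 2.
Proof.
case: n z => [|n] z; first by rewrite !big_ord0 expr0n /= mul0r.
set s := \sum_i z i.
have dev : \sum_i (n.+1%:R * z i - s) ^+ 2 = n.+1%:R * (n.+1%:R * \sum_i z i ^+ 2 - s ^+ 2).
  rewrite (eq_bigr (fun i => n.+1%:R ^+ 2 * z i ^+ 2 - (2 * n.+1%:R * s) * z i + s ^+ 2));
    last by move=> i _; ring.
  rewrite !big_split /= sumrN -!mulr_sumr sumr_const card_ord -/s -mulr_natr; ring.
have : 0 <= n.+1%:R * (n.+1%:R * \sum_i z i ^+ 2 - s ^+ 2).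
  by rewrite -dev; apply: sumr_ge0 => i _; exact: sqr_ge0.
by rewrite pmulr_rge0 ?ltr0Sn // subr_ge0.
Qed.

Lemma bernoulli_mul_le1 (t : R) k : 0 <= t <= 1 -> (1 - t) ^+ k * (1 + k%:R * t) <= 1.
Proof.
case/andP=> t0 t1; elim: k => [|k IH]; first by rewrite expr0 mul0r addr0 mulr1.
apply: le_trans IH; rewrite exprSr -mulrA ler_wpM2l ?exprn_ge0 ?subr_ge0 //.
have k_ge0 : 0 <= k%:R :> R by [].
rewrite -natr1; nra.
Qed.

Lemma mul_exp_sub_antimono (F x y : R) k : F <= k.+1%:R * y -> 0 <= y -> y <= x <= F ->
  x * (F - x) ^+ k <= y * (F - y) ^+ k.
Proof.
move=> Fy y0 /andP[yx xF]; set a := F - y.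
have [a0|a_neq0] := eqVneq a 0; first by have -> : x = y by rewrite /a in a0; lra.
have a_gt0 : 0 < a by rewrite lt_def a_neq0 subr_ge0 (le_trans yx xF).
set t := (x - y) / a.
have /andP[t0 t1] : 0 <= t <= 1.
  rewrite /t divr_ge0 ?ler_pdivrMr ?mul1r ?subr_ge0 ?(ltW a_gt0) //= /a; lra.
have xE : x = y + a * t by rewrite /t mulrC divfK ?gt_eqF //; ring.
have ->: F - x = a * (1 - t) by rewrite xE /a; ring.
have a_le : a <= k%:R * y by move: Fy; rewrite -natr1 /a; lra.
rewrite exprMn mulrA; apply: (le_trans (y := y * (1 + k%:R * t) * a ^+ k * (1 - t) ^+ k)).
  rewrite !ler_wpM2r ?exprn_ge0 ?(ltW a_gt0) ?subr_ge0 // xE.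
  by have := ler_wpM2r t0 a_le; nra.
rewrite -!mulrA ler_wpM2l // mulrCA -[X in _ <= X]mulr1.
by rewrite ler_wpM2l ?exprn_ge0 ?(ltW a_gt0) // mulrC bernoulli_mul_le1 ?t0.
Qed.
End RealInequalities.

Section Gram.
Variable R : realFieldType.

Lemma gram_diag_ge0 m n (B : 'M[R]_(m, n)) j : 0 <= (B^T *m B) j j.
Proof. by rewrite mxE; apply: sumr_ge0 => i _; rewrite mxE -expr2 sqr_ge0. Qed.

Lemma gram_cV_eq0 m (b : 'cV[R]_m) : (b^T *m b) 0 0 = 0 -> b = 0.
Proof.
rewrite mxE => /eqP; rewrite psumr_eq0 => [/allP bb0|i _]; last first.
  by rewrite !mxE -expr2 sqr_ge0.
apply/matrixP => i j; rewrite (ord1 j) mxE.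
by have := bb0 i (mem_index_enum _); rewrite !mxE -expr2 sqrf_eq0 => /eqP.
Qed.

Lemma det_block_scalar n (a : R) (b : 'rV[R]_n) (c : 'cV[R]_n) (d : 'M[R]_n) :
  a != 0 -> \det (block_mx a%:M b c d) = a * \det (d - a^-1 *: (c *m b)).
Proof.
move=> a0.
have -> : block_mx a%:M b c d =
   block_mx 1%:M 0 (a^-1 *: c) 1%:M *m block_mx a%:M b 0 (d - a^-1 *: (c *m b)).
  rewrite mulmx_block !mul1mx !mul0mx !addr0 ?mulmx1 ?add0r.
  rewrite scalemxAl [_ + (d - _)]addrC subrK.
  by rewrite mul_mx_scalar scalerA mulrC mulVf // scale1r.
by rewrite det_mulmx det_lblock det_ublock !det1 !det_scalar1 !mul1r.
Qed.

Lemma det_gram_le_prod_diag n m (B : 'M[R]_(m, n)) :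
  \det (B^T *m B) <= \prod_(j < n) (B^T *m B) j j.
Proof.
elim: n m B => [|n IH] m B; first by rewrite det_mx00 big_ord0.
move: B; rewrite -[n.+1]/(1 + n)%N => B.
rewrite -[B]hsubmxK; set b := lsubmx B; set B' := rsubmx B.
rewrite tr_row_mx mul_col_row (@big_split_ord _ _ _ 1 n) big_ord1 block_mxEul.
under [X in _ <= _ * X]eq_bigr do rewrite block_mxEdr.
set al := (b^T *m b) 0 0; have bb : b^T *m b = al%:M by rewrite [LHS]mx11_scalar.
rewrite bb.
have [al0|al_neq0] := eqVneq al 0.
  rewrite (gram_cV_eq0 al0) trmx0 mul0mx mulmx0 al0 det_lblock det_scalar1.
  by rewrite !mul0r.
have al_gt0 : 0 < al by rewrite lt_def al_neq0 gram_diag_ge0.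
rewrite det_block_scalar // ler_pM2l //.
(* projecting B' orthogonally to b turns the Schur complement into a Gram matrix *)
set P := householder_mx al^-1 b.
have PP : P *m P = P.
  by rewrite (householder_mxM _ _ bb) mulrAC mulVf // mul1r addrK.
have schurE : (P *m B')^T *m (P *m B') =
    B'^T *m B' - al^-1 *: (B'^T *m b *m (b^T *m B')).
  rewrite trmx_mul trmx_householder -/P mulmxA -(mulmxA B'^T P P) PP.
  by rewrite mulmxBr mulmxBl mulmx1 -scalemxAr -scalemxAl !mulmxA.
rewrite -schurE; apply: le_trans (IH _ _) _.
apply: ler_prod => j _; rewrite gram_diag_ge0 schurE mxE gerDl.
rewrite -[B'^T *m b]trmxK trmx_mul trmxK mxE oppr_le0 mxE.
by rewrite /= mulr_ge0 ?gram_diag_ge0 // invr_ge0 ltW.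
Qed.

Lemma det_gram_le_AGM k m (B : 'M[R]_(m, k.+1)) (G := B^T *m B) :
  \det G <= G 0 0 * ((\tr G - G 0 0) / k%:R) ^+ k.
Proof.
apply: le_trans (det_gram_le_prod_diag B) _; rewrite -/G big_ord_recl.
rewrite ler_wpM2l ?gram_diag_ge0 // /mxtrace big_ord_recl addrC addrK.
have [+ _] := leif_AGM (A := predT) (fun j _ => gram_diag_ge0 B (lift 0 j)).
by rewrite cardT size_enum_ord.
Qed.

End Gram.

Section DetBound.
Variable R : rcfType.

(* the reflection exchanging e_i0 and the normalised all-ones vector *)
Lemma exists_orthomx_const_col n (i0 : 'I_n) : (1 < n)%N ->
  exists H : 'M[R]_n, H *m H^T = 1%:M /\ forall j, H j i0 = (Num.sqrt n%:R)^-1.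
Proof.
move=> n_gt1; set r := Num.sqrt (n%:R : R).
have r2 : r ^+ 2 = n%:R by rewrite sqr_sqrtr // ler0n.
have r_neq0 : r != 0.
  apply: contraPneq r2 => ->; rewrite expr0n /= => /eqP.
  by rewrite eq_sym pnatr_eq0 gtn_eqF // ltnW.
have r1_neq0 : r - 1 != 0.
  rewrite subr_eq0; apply: contraPneq r2 => ->; rewrite expr1n => /eqP.
  by rewrite eq_sym pnatr_eq1 gtn_eqF.
set v : 'cV[R]_n := \col_j (r * (j == i0)%:R - 1).
have vv : v^T *m v = (2 * r * (r - 1))%:M.
  apply/matrixP => i j; rewrite (ord1 i) (ord1 j) !mxE eqxx mulr1n (bigD1 i0) //=.
  under eq_bigr => j' j'i0 do rewrite !mxE (negbTE j'i0) mulr0 sub0r mulrNN mulr1.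
  rewrite !mxE eqxx sumr_const cardC1 card_ord mulr1.
  have -> : n.-1%:R = r ^+ 2 - 1 :> R.
    by rewrite r2 -[in RHS](prednK (ltnW n_gt1)) -natr1 addrK.
  ring.
set c := (r * (r - 1))^-1.
exists (householder_mx c v); split.
  rewrite trmx_householder (householder_mxM _ _ vv).
  rewrite (_ : _ - _ = 0) ?/householder_mx ?scale0r ?subr0 //.
  by rewrite /c; field; rewrite r_neq0 r1_neq0.
move=> j; rewrite !mxE big_ord1 !mxE eqxx /c.
by case: (j == i0); rewrite ?mulr1n ?mulr0n ?mulr1 ?mulr0; field; rewrite r_neq0 r1_neq0.
Qed.

Lemma det_sqr_le k (M : 'M[R]_k.+1) (F := \sum_i \sum_j M i j ^+ 2)
    (y := ((\sum_i \sum_j M i j) / k.+1%:R) ^+ 2) :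
  (0 < k)%N -> F <= k.+1%:R * y -> \det M ^+ 2 <= y * ((F - y) / k%:R) ^+ k.
Proof.
move=> k_gt0 Fy; have [H [HHt Hcol]] := exists_orthomx_const_col (@ord0 k) k_gt0.
set B := M *m H; set G := B^T *m B.
have detG : \det G = \det M ^+ 2.
  have detH : \det H ^+ 2 = 1 by rewrite expr2 -{2}det_tr -det_mulmx HHt det1.
  by rewrite det_mulmx det_tr det_mulmx -expr2 exprMn detH mulr1.
have trG : \tr G = F.
  rewrite /G mxtrace_mulC /B trmx_mul mulmxA -(mulmxA M) HHt mulmx1.
  by apply: eq_bigr => i _; rewrite mxE; apply: eq_bigr => j _; rewrite mxE expr2.
(* G 0 0 is the squared norm of M times the normalised all-ones vector *)
have G00 : G 0 0 = (\sum_i (\sum_j M i j) ^+ 2) / k.+1%:R.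
  rewrite mxE mulr_suml; apply: eq_bigr => i _; rewrite !mxE.
  under eq_bigr do rewrite Hcol.
  by rewrite -mulr_suml -expr2 exprMn exprVn sqr_sqrtr ?ler0n.
have y_le_G00 : y <= G 0 0.
  rewrite G00 /y expr_div_n ler_pdivrMr ?exprn_gt0 ?ltr0Sn // expr2 mulrA.
  by rewrite divfK ?pnatr_eq0 // -expr2 [X in _ <= X]mulrC sqr_sum_le.
have G00_le_F : G 0 0 <= F.
  by rewrite -trG /mxtrace big_ord_recl lerDl sumr_ge0 // => j _; apply: gram_diag_ge0.
rewrite -detG; apply: le_trans (det_gram_le_AGM B) _; rewrite -/G trG.
rewrite !expr_div_n !mulrA ler_wpM2r ?invr_ge0 ?exprn_ge0 ?ler0n //.
by apply: mul_exp_sub_antimono; rewrite ?sqr_ge0 ?y_le_G00.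
Qed.
Lemma normr_det_le_moments k (M : 'M[R]_k.+1) (m q : R) :
  (0 < k)%N -> 0 <= m -> 0 <= q -> q <= m ^+ 2 ->
  \sum_i \sum_j M i j = k.+1%:R ^+ 2 * m ->
  \sum_i \sum_j M i j ^+ 2 = (k.+1%:R * m) ^+ 2 + k%:R * k.+1%:R ^+ 2 * q ->
  `|\det M| <= k.+1%:R ^+ k.+1 * m * Num.sqrt q ^+ k.
Proof.
move=> k_gt0 m0 q0 qm sumE sum2E.
have := @det_sqr_le k M k_gt0; rewrite sumE sum2E.
set n : R := k.+1%:R.
have k1_neq0 : 1 + k%:R != 0 :> R by rewrite nat1r pnatr_eq0.
have k_neq0 : k%:R != 0 :> R by rewrite pnatr_eq0 -lt0n.
have -> : n ^+ 2 * m / n = n * m by field.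
set y := (n * m) ^+ 2.
have -> : (y + k%:R * n ^+ 2 * q - y) / k%:R = n ^+ 2 * q by field.
have Fy : y + k%:R * n ^+ 2 * q <= n * y.
  have : k%:R * n ^+ 2 * q <= k%:R * n ^+ 2 * m ^+ 2.
    by rewrite ler_wpM2l // mulr_ge0 // sqr_ge0.
  rewrite /y /n -natr1; lra.
move=> /(_ Fy) det2_le.
have rhs_ge0 : 0 <= n ^+ k.+1 * m * Num.sqrt q ^+ k.
  by rewrite !mulr_ge0 ?exprn_ge0 ?sqrtr_ge0 // ler0n.
rewrite -(ler_sqr (normr_ge0 _) rhs_ge0) real_normK ?num_real //.
suff -> : (n ^+ k.+1 * m * Num.sqrt q ^+ k) ^+ 2 = y * (n ^+ 2 * q) ^+ k by [].
rewrite /y !exprMn [n ^+ k.+1]exprS (exprAC (Num.sqrt q)) sqr_sqrtr //; ring.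
Qed.
End DetBound.

Lemma sum_entries_const_count (T : eqType) (V : nmodType) n (M : 'M[T]_n)
    (g : 'I_n -> T) (f : T -> V) :
  injective g -> (forall k, entry_count M (g k) = n) ->
  \sum_i \sum_j f (M i j) = (\sum_k f (g k)) *+ n.
Proof.
move=> g_inj count_g.
(* c p counts the k with M p = g k: at most one by injectivity, n * n in total *)
pose c (p : 'I_n * 'I_n) := (\sum_k (M p.1 p.2 == g k))%N.
have c_le1 p : (c p <= 1)%N.
  case: (pickP (fun k => M p.1 p.2 == g k)) => [k0 Mk0|none]; last first.
    by rewrite /c big1 // => k _; rewrite none.
  rewrite /c (bigD1 k0) //= Mk0 big1 // => k kk0.
  by apply/eqP; rewrite eqb0 (eqP Mk0) (inj_eq g_inj) eq_sym.
have count_k k : (\sum_p (M p.1 p.2 == g k))%N = n.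
  rewrite -[RHS](count_g k) /entry_count -sum1_card [RHS]big_mkcond /=.
  by apply: eq_bigr => p _; rewrite inE; case: (_ == _).
have c1 p : c p = 1%N.
  have : (\sum_p (1 - c p))%N = 0%N.
    rewrite sumnB // /c exchange_big /=.
    under [X in (_ - X)%N]eq_bigr do rewrite count_k.
    by rewrite sum1_card card_prod card_ord sum_nat_const card_ord subnn.
  move/eqP; rewrite sum_nat_eq0 => /forallP /(_ p); rewrite subn_eq0 => c_ge1.
  by apply/eqP; rewrite eqn_leq c_le1.
rewrite pair_big /=.
transitivity (\sum_(p : 'I_n * 'I_n) \sum_k f (g k) *+ (M p.1 p.2 == g k)).
  apply: eq_bigr => p _; rewrite -[LHS]mulr1n -(c1 p) -sumrMnr.
  by apply: eq_bigr => k _; case: eqP => [->|].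
rewrite exchange_big -sumrMnl; apply: eq_bigr => k _.
by rewrite sumrMnr count_k.
Qed.

Lemma sum_arith_progression (R : comPzRingType) (c : R) n :
  \sum_(k < n) (c + k%:R) * 2 = n%:R * (2 * c + n%:R - 1).
Proof. by elim: n => [|n IH]; rewrite ?big_ord0 ?mul0r // big_ord_recr /= IH; ring. Qed.

Lemma sum_sqr_arith_progression (R : comPzRingType) (c : R) n :
  \sum_(k < n) (c + k%:R) ^+ 2 * 6 =
    n%:R * (6 * c ^+ 2 + 6 * c * (n%:R - 1) + (n%:R - 1) * (2 * n%:R - 1)).
Proof. by elim: n => [|n IH]; rewrite ?big_ord0 ?mul0r // big_ord_recr /= IH; ring. Qed.

Lemma normr_det_le_arith_entries (R : rcfType) n (c : R) (M : 'M[R]_n) :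
  (1 < n)%N -> 0 <= c -> (forall k : 'I_n, entry_count M (c + k%:R) = n) ->
  `|\det M| <= n%:R ^+ n * (c + (n%:R - 1) / 2) * Num.sqrt ((n%:R + 1) / 12) ^+ (n - 1).
Proof.
case: n M => [|[|k]] // M _ c0 count_M; rewrite subn1 /=.
set N : R := k.+2%:R; have N2 : 2 <= N by rewrite ler_nat.
pose g (i : 'I_k.+2) := c + i%:R.
have g_inj : injective g by move=> i j /addrI /eqP; rewrite eqr_nat => /eqP /val_inj.
have sum_f (f : R -> R) := sum_entries_const_count f g_inj count_M.
have sum_g : \sum_i g i = N * (2 * c + N - 1) / 2.
  by rewrite -sum_arith_progression -mulr_suml mulfK ?pnatr_eq0.
have sum_g2 : \sum_i g i ^+ 2 =
    N * (6 * c ^+ 2 + 6 * c * (N - 1) + (N - 1) * (2 * N - 1)) / 6.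
  by rewrite -sum_sqr_arith_progression -mulr_suml mulfK ?pnatr_eq0.
apply: normr_det_le_moments => //.
- by rewrite addr_ge0 // divr_ge0 // subr_ge0 ler1n.
- by rewrite divr_ge0 // addr_ge0.
- nra.
- by rewrite (sum_f id) /= sum_g -mulr_natl; field.
- by rewrite (sum_f (fun x => x ^+ 2)) /= sum_g2 -mulr_natl; field.
Qed.

Theorem mainTheorem10 (R : rcfType) (n : nat) (hn : (2 <= n)%N) :
  (forall M : 'M[R]_n,
     (forall k : nat, (k < n)%N -> entry_count M k%:R = n) ->
     `|\det M| <= n%:R ^+ n * ((n%:R - 1) / 2)
                   * Num.sqrt ((n%:R + 1) / 12) ^+ (n - 1)) /\
  (forall M : 'M[R]_n,
     (forall k : nat, (1 <= k <= n)%N -> entry_count M k%:R = n) ->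
     `|\det M| <= n%:R ^+ n * ((n%:R + 1) / 2)
                   * Num.sqrt ((n%:R + 1) / 12) ^+ (n - 1)).
Proof.
split=> M count_M.
- have := @normr_det_le_arith_entries R n 0 M hn (lexx 0).
  by rewrite add0r; apply=> k; rewrite add0r count_M.
- have := @normr_det_le_arith_entries R n 1 M hn ler01.
  rewrite (_ : 1 + _ = (n%:R + 1) / 2); last by field.
  by apply=> k; rewrite nat1r count_M //= ltn_ord.
Qed.
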